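(* Let $n\ge1$ and let $x\in\mathbb{Z}_n$ have order $m$. Then the degree of $x$ in $OD(\mathbb{Z}_n)$ is $$\deg(x)=m-2\phi(m)+\sum_{\lambda\mid \frac{n}{m}}\phi(\lambda m),$$ where $\phi$ is Euler's totient function and the sum runs over positive divisors $\lambda$ of $n/m$.
   Context: $\mathbb{Z}_n$ is the additive cyclic group of integers modulo $n$. For a finite group $G$, $o(x)$ denotes the order of $x\in G$. The order-divisor graph $OD(G)$ is the simple undirected graph with vertex set $G$, in which two distinct vertices $x,y$ are adjacent if and only if $o(x)\neq o(y)$ and either $o(x)\mid o(y)$ or $o(y)\mid o(x)$. *)

From mathcomp Require Import all_boot all_order all_algebra all_fingroup.
Set Implicit Arguments. Unset Strict Implicit. Unset Printing Implicit Defensive.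

Definition od_adj (gT : finGroupType) (x y : gT) : bool :=
  [&& x != y, #[x]%g != #[y]%g & (#[x]%g %| #[y]%g) || (#[y]%g %| #[x]%g)].

Definition od_deg (gT : finGroupType) (x : gT) : nat :=
  #|[set y : gT | od_adj x y]|.

From mathcomp Require Import all_boot all_order all_algebra all_fingroup all_solvable.
From mathcomp Require Import zify.

Set Implicit Arguments.
Unset Strict Implicit.
Unset Printing Implicit Defensive.

(* In a cyclic group there is exactly one subgroup of each order dividing the
   group order, so the elements whose order divides o(x) form <[x]> (o(x) of
   them), those of order o(x) are its generators (phi(o(x)) of them), and those
   whose order is a multiple of o(x) are counted by grouping them by order.
   The neighbours of x in OD(G) are the first and the third set with the
   second one removed from each. *)

Lemma sum_divisors_multiples (F : nat -> nat) (N m : nat) :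
  0 < N -> m %| N ->
  \sum_(d <- divisors N | m %| d) F d = \sum_(l <- divisors (N %/ m)) F (l * m).
Proof.
move=> N_gt0 m_dvd_N; have m_gt0 := dvdn_gt0 N_gt0 m_dvd_N.
have N_eq : N = N %/ m * m by rewrite divnK.
have Nm_gt0 : 0 < N %/ m by rewrite -(ltn_pmul2r m_gt0) -N_eq.
rewrite -big_filter -(big_map (muln^~ m) predT); apply/perm_big/uniq_perm.
- exact/filter_uniq/divisors_uniq.
- by rewrite map_inj_uniq ?divisors_uniq // => k l /eqP; rewrite eqn_pmul2r // => /eqP.
move=> d; rewrite mem_filter -dvdn_divisors //.
apply/andP/mapP => [[/dvdnP[l ->] l_dvd] | [l l_dvd ->]].
  by exists l; rewrite // -dvdn_divisors // -(dvdn_pmul2r m_gt0) -N_eq.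
by rewrite dvdn_mull // N_eq dvdn_pmul2r // dvdn_divisors.
Qed.

Section OrderDivisorDegree.
Variable gT : finGroupType.
Implicit Types x y : gT.
Local Open Scope group_scope.

Lemma order_dvd_card x : #[x] %| #|gT|.
Proof. by rewrite -cardsT order_dvdG ?inE. Qed.

Lemma od_deg_orders x :
  (od_deg x + 2 * #|[set y : gT | #[y] == #[x]]| =
   #|[set y : gT | #[y] %| #[x]]| + #|[set y : gT | #[x] %| #[y]]|)%N.
Proof.
set E := [set y : gT | #[y] == #[x]].
set A := [set y : gT | #[y] %| #[x]]; set B := [set y : gT | #[x] %| #[y]].
have adjE : [set y : gT | od_adj x y] = (A :\: E) :|: (B :\: E).
  apply/setP => y; rewrite !inE /od_adj.
  have [->|ne] := eqVneq #[y] #[x]; first by rewrite andbF.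
  have -> : x != y by apply: contra_neqN ne => /eqP->.
  by rewrite orbC.
have disjAB : (A :\: E) :&: (B :\: E) = set0.
  apply/setP => y; rewrite !inE.
  have [//|ne] /= := eqVneq #[y] #[x].
  by apply/negP => /andP[yx xy]; rewrite eqn_dvd yx xy in ne.
have EA : E \subset A by apply/subsetP => y; rewrite !inE => /eqP->.
have EB : E \subset B by apply/subsetP => y; rewrite !inE => /eqP->.
rewrite /od_deg adjE; move: (cardsUI (A :\: E) (B :\: E)).
rewrite disjAB cards0 addn0 !cardsDS // => ->.
have := subset_leq_card EA; have := subset_leq_card EB; lia.
Qed.
End OrderDivisorDegree.

Section CyclicGroup.
Variable gT : finGroupType.
Hypothesis cyclic_gT : cyclic [set: gT].
Implicit Types x y : gT.
Local Open Scope group_scope.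

Lemma mem_cycle_order_dvd x y : (y \in <[x]>) = (#[y] %| #[x]).
Proof. by rewrite -cycle_subG -(cardSg_cyclic cyclic_gT) ?subsetT. Qed.

Lemma card_order_eq x : #|[set y : gT | #[y] == #[x]]| = totient #[x].
Proof.
rewrite totient_gen; apply: eq_card => y; rewrite !inE /generator.
by rewrite (eq_subG_cyclic cyclic_gT) ?subsetT // eq_sym.
Qed.

Lemma exists_order d : d %| #|gT| -> exists x, #[x] = d.
Proof.
have gT_gt0 : 0 < #|gT| by rewrite -cardsT cardG_gt0.
have /cyclicP[g gen_g] := cyclic_gT.
have order_g : #[g] = #|gT| by rewrite orderE -gen_g cardsT.
move=> d_dvd; exists (g ^+ (#|gT| %/ d)).
by rewrite orderXdiv order_g ?dvdn_div // divnA // mulKn.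
Qed.

Lemma card_order_pred (P : pred nat) :
  #|[set y : gT | P #[y]]| = \sum_(d <- divisors #|gT| | P d) totient d.
Proof.
have gT_gt0 : 0 < #|gT| by rewrite -cardsT cardG_gt0.
transitivity (\sum_(d <- divisors #|gT| | P d) \sum_(y : gT) (#[y] == d : nat)).
  rewrite exchange_big /= -sum1_card big_mkcond /=; apply: eq_bigr => y _.
  rewrite inE big_mkcond (bigD1_seq #[y]) ?divisors_uniq -?dvdn_divisors
    ?order_dvd_card //=.
  rewrite eqxx big1 ?addn0 // => d; rewrite eq_sym => /negbTE->; by case: (P d).
rewrite big_seq_cond [RHS]big_seq_cond; apply: eq_bigr => d /andP[d_div _].
move: d_div; rewrite -dvdn_divisors // => /exists_order[x <-].
by rewrite -card_order_eq -sum1_card [RHS]big_mkcond; apply: eq_bigr => y _; rewrite inE.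
Qed.

Lemma od_deg_cyclic x :
  (od_deg x + 2 * totient #[x] =
   #[x] + \sum_(l <- divisors (#|gT| %/ #[x])) totient (l * #[x]))%N.
Proof.
have dvd_x_cycle : [set y : gT | #[y] %| #[x]] = <[x]>.
  by apply/setP => y; rewrite inE mem_cycle_order_dvd.
have gT_gt0 : 0 < #|gT| by rewrite -cardsT cardG_gt0.
rewrite -card_order_eq -sum_divisors_multiples ?order_dvd_card //.
rewrite -(card_order_pred (fun d => #[x] %| d)).
by rewrite od_deg_orders dvd_x_cycle -orderE.
Qed.

End CyclicGroup.

Local Open Scope ring_scope.

Theorem mainTheorem11 (n : nat) (hn : (0 < n)%N) (x : 'I_n.-1.+1) :
  (od_deg x)%:Z =
    (#[x]%g)%:Z - 2 * (totient #[x]%g)%:Z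
    + (\sum_(l <- divisors (n %/ #[x]%g)) totient (l * #[x]%g))%:Z.
Proof.
have cyclic_Zn : cyclic [set: 'I_n.-1.+1] by rewrite Zp_cycle cycle_cyclic.
have card_Zn : #|'I_n.-1.+1| = n by rewrite card_ord prednK.
by have := od_deg_cyclic cyclic_Zn x; rewrite card_Zn; lia.
Qed.
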